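(* For every sufficiently large $n$, there exists a 3-uniform hypergraph $T$ with $10n$ vertices and $120n$ hyperedges, together with a set $Z\subseteq V(T)$ of $2n$ vertices, such that for any set $Z'\subseteq Z$ of $n$ vertices, the hypergraph obtained from $T$ by deleting the vertices of $Z'$ has a perfect matching.
   Context: A perfect matching of a hypergraph is a set of pairwise disjoint hyperedges covering all its vertices; deleting a vertex deletes it together with all hyperedges containing it. *)

From mathcomp Require Import all_boot.
Set Implicit Arguments. Unset Strict Implicit. Unset Printing Implicit Defensive.

Definition uniform (V : finType) (k : nat) (E : {set {set V}}) : Prop :=
  forall e, e \in E -> #|e| = k.

(* Hypergraph obtained by deleting the vertex set D: vertex set ~: D, and
   the hyperedges of E that avoid D. *)
Definition del_edges (V : finType) (E : {set {set V}}) (D : {set V}) : {set {set V}} :=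
  [set e in E | [disjoint e & D]].

Definition perfect_matching (V : finType) (W : {set V}) (E : {set {set V}})
    (M : {set {set V}}) : Prop :=
  M \subset E /\ trivIset M /\ cover M = W.

Definition has_perfect_matching (V : finType) (W : {set V}) (E : {set {set V}}) : Prop :=
  exists M : {set {set V}}, perfect_matching W E M.

From mathcomp Require Import all_boot zify.
Set Implicit Arguments. Unset Strict Implicit. Unset Printing Implicit Defensive.

(* Take the vertices 0, ..., 10n - 1, let Z be the 2n multiples of 5, and let
   the hyperedges be all triples lying in four consecutive vertices (at most
   90n of them), padded with arbitrary triples up to 120n.  The deleted
   vertices are pairwise at distance >= 3, so among any three consecutive
   integers at least two survive; hence in the increasing enumeration of the
   9n surviving vertices the (i+2)-th is at most the i-th plus 3, and cutting
   that enumeration into consecutive blocks of three is a perfect matching. *)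

Lemma leq_120n_bin n : 0 < n -> 120 * n <= 'C(10 * n, 3).
Proof.
move=> n_gt0; have := bin_ffact (10 * n) 3.
rewrite !ffactnS ffactn0 (_ : 3`! = 6) // muln1.
have : 9 * 8 <= (10 * n).-1 * (10 * n).-2 by rewrite leq_mul //; lia.
nia.
Qed.

Lemma subset_between (T : finType) (A B : {set T}) k :
  A \subset B -> #|A| <= k <= #|B| ->
  exists C : {set T}, [/\ A \subset C, C \subset B & #|C| = k].
Proof.
move=> AB /andP[Ak kB].
have /card_geqP[s [s_uniq s_size sBA]] : k - #|A| <= #|B :\: A|.
  by rewrite cardsDS //; lia.
have : [set x in s] \subset B :\: A by apply/subsetP => x; rewrite inE => /sBA.
rewrite subsetD disjoint_sym => /andP[sB As].
exists (A :|: [set x in s]); split; first exact: subsetUl.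
  by rewrite subUset AB.
by rewrite cardsU (disjoint_setI0 As) cards0 cardsE (card_uniqP s_uniq) s_size; lia.
Qed.

Lemma sorted_val_enum N (A : {set 'I_N}) : sorted ltn (map val (enum A)).
Proof.
rewrite -[enum _](eq_filter (mem_enum _)) -(eq_filter (mem_map val_inj _)).
by rewrite -filter_map (sorted_filter ltn_trans) // unlock val_ord_enum iota_ltn_sorted.
Qed.

Lemma sorted_nth_add2_le (t : seq nat) i y1 y2 :
  sorted ltn t -> i < size t -> y1 \in t -> y2 \in t ->
  nth 0 t i < y1 < y2 -> nth 0 t i.+2 <= y2.
Proof.
rewrite ltn_sorted_uniq_leq => /andP[t_uniq t_sorted] it y1t y2t /andP[ty1 y12].
have index_mono : {in t &, forall x y, x < y -> index x t < index y t}.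
  move=> x y xt yt; apply: contraTT; rewrite -!leqNgt.
  exact: (sorted_leq_index leq_trans leqnn t_sorted).
have := index_mono _ _ (mem_nth 0 it) y1t ty1.
have := index_mono _ _ y1t y2t y12.
rewrite index_uniq // -{2}(nth_index 0 y2t) => lt12 lti1.
have y2_idx : index y2 t < size t by rewrite index_mem.
by apply: (sorted_leq_nth leq_trans leqnn 0 t_sorted); rewrite ?inE ?index_mem //; lia.
Qed.

Definition apart3 N (D : {set 'I_N}) : Prop :=
  {in D &, forall u v : 'I_N, u < v -> u + 3 <= v}.

Lemma two_outside_apart3 N (D : {set 'I_N}) a : apart3 D -> a + 3 < N ->
  exists y1 y2 : 'I_N, [/\ a < y1 < y2, y2 <= a + 3, y1 \notin D & y2 \notin D].
Proof.
move=> D_apart aN.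
have a1N : a + 1 < N by lia.
have a2N : a + 2 < N by lia.
pose y1 := Ordinal a1N; pose y2 := Ordinal a2N; pose y3 := Ordinal aN.
have notboth (u v : 'I_N) : u \in D -> u < v <= u + 2 -> v \notin D.
  by move=> uD uv; apply/negP => /(D_apart _ _ uD)/(_ _); lia.
have [y1D | y1D] := boolP (y1 \in D).
  by exists y2, y3; split => /=; try apply: (notboth y1) => //=; lia.
have [y2D | y2D] := boolP (y2 \in D).
  by exists y1, y3; split => //=; try apply: (notboth y2) => //=; lia.
by exists y1, y2; split => //=; lia.
Qed.

Lemma enum_nth_add2_le N (W : {set 'I_N}) i : apart3 (~: W) -> i.+2 < #|W| ->
  nth 0 (map val (enum W)) i.+2 <= nth 0 (map val (enum W)) i + 3.
Proof.
move=> apartC iW; set t := map val (enum W).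
have t_size : size t = #|W| by rewrite size_map cardE.
have t_mem (y : 'I_N) : y \in W -> val y \in t by rewrite -mem_enum; apply: map_f.
have [//|lt_a3] := leqP (nth 0 t i.+2) (nth 0 t i + 3).
have cN : nth 0 t i.+2 < N.
  have /mapP[y _ ->] : nth 0 t i.+2 \in t by rewrite mem_nth ?t_size.
  exact: ltn_ord.
have [y1 [y2 [ay12 y2a]]] := two_outside_apart3 apartC (ltn_trans lt_a3 cN).
rewrite !inE !negbK => /t_mem y1t /t_mem y2t.
have it : i < size t by rewrite t_size; lia.
have := sorted_nth_add2_le (sorted_val_enum W) it y1t y2t ay12.
rewrite -/t /=; lia.
Qed.

Lemma index_div3_class (T : finType) (s : seq T) x :
  uniq s -> x \in s -> 3 %| size s ->
  exists2 j, j.+2 < size s &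
    [set y in s | index x s %/ 3 == index y s %/ 3] =
    [set nth x s j; nth x s j.+1; nth x s j.+2].
Proof.
move=> s_uniq xs s3; have x_idx : index x s < size s by rewrite index_mem.
exists (3 * (index x s %/ 3)); first lia.
apply/setP => y; rewrite !inE; apply/idP/idP.
  case/andP => ys /eqP idx_y; rewrite -(nth_index x ys).
  have : index y s = 3 * (index x s %/ 3) \/ index y s = (3 * (index x s %/ 3)).+1 \/
         index y s = (3 * (index x s %/ 3)).+2 by lia.
  by case=> [|[]] ->; rewrite eqxx ?orbT.
by case/orP => [/orP[]|] /eqP ->; rewrite mem_nth ?index_uniq //=; lia.
Qed.

(* The 3-sets {x < y < z} with z <= x + 3.  A window_triple whose points fall
   outside 'I_N or coincide has fewer than 3 elements and is filtered out. *)
Definition window_triple N (p : 'I_N * 'I_3 * 'I_3) : {set 'I_N} :=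
  let: (x, i, j) := p in [set y : 'I_N | val y \in [:: val x; x + i.+1; x + j.+1]].

Definition window_triples N : {set {set 'I_N}} :=
  [set e in [set window_triple p | p : 'I_N * 'I_3 * 'I_3] | #|e| == 3].

Lemma card_window_triples N : #|window_triples N| <= 9 * N.
Proof.
have sub_image : window_triples N \subset [set window_triple p | p : 'I_N * 'I_3 * 'I_3].
  by apply/subsetP => e; rewrite inE => /andP[].
apply: leq_trans (subset_leq_card sub_image) _.
apply: leq_trans (leq_imset_card _ _) _.
by rewrite !card_prod !card_ord; lia.
Qed.

Lemma mem_window_triples N (x y z : 'I_N) :
  x < y < z -> z <= x + 3 -> [set x; y; z] \in window_triples N.
Proof.
move=> /andP[xy yz] zx; rewrite inE; apply/andP; split.
  have yi : y - x - 1 < 3 by lia.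
  have zi : z - x - 1 < 3 by lia.
  apply/imsetP; exists (x, Ordinal yi, Ordinal zi) => //.
  apply/setP => w; rewrite !inE -!val_eqE /=.
  have -> : x + (y - x - 1).+1 = y by lia.
  have -> : x + (z - x - 1).+1 = z by lia.
  by rewrite orbA.
rewrite setUC cardsU1 cards2 !inE -!val_eqE /=.
have /negPf-> : z != x :> nat by lia.
have /negPf-> : z != y :> nat by lia.
by have -> : x != y :> nat by lia.
Qed.

Lemma window_partition N (W : {set 'I_N}) : apart3 (~: W) -> 3 %| #|W| ->
  exists2 P, partition P W & P \subset window_triples N.
Proof.
move=> apartC W3.
exists (preim_partition (fun y => index y (enum W) %/ 3) W); first exact: preim_partitionP.
apply/subsetP => _ /imsetP[x xW ->].
have xs : x \in enum W by rewrite mem_enum.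
have -> : [set y in W | index x (enum W) %/ 3 == index y (enum W) %/ 3] =
          [set y in enum W | index x (enum W) %/ 3 == index y (enum W) %/ 3].
  by apply/setP => y; rewrite !inE mem_enum.
have : 3 %| size (enum W) by rewrite -cardE.
case/(index_div3_class (enum_uniq W) xs) => j j_idx ->.
have lt_size k : k <= j.+2 -> k < size (enum W) by move/leq_ltn_trans; apply.
have val_nth k : k <= j.+2 -> val (nth x (enum W) k) = nth 0 (map val (enum W)) k.
  by move/lt_size => ?; rewrite (nth_map x).
have nth_lt := sorted_ltn_nth ltn_trans 0 (sorted_val_enum W).
apply: mem_window_triples; rewrite !val_nth ?nth_lt ?inE ?size_map ?lt_size //; try lia.
by apply: enum_nth_add2_le; rewrite // cardE.
Qed.

Lemma partition_perfect_matching (V : finType) (E P : {set {set V}}) (W : {set V}) :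
  partition P W -> P \subset E -> has_perfect_matching W (del_edges E (~: W)).
Proof.
case/and3P => /eqP coverP trivP _ PE; exists P; split => //.
apply/subsetP => e eP; rewrite inE (subsetP PE) //= disjoints_subset setCK -coverP.
exact: bigcup_sup.
Qed.

Lemma window_hypergraph n : 0 < n ->
  exists E : {set {set 'I_(10 * n)}},
    [/\ window_triples (10 * n) \subset E, uniform 3 E & #|E| = 120 * n].
Proof.
move=> n_gt0.
have windows3 : window_triples (10 * n) \subset [set e : {set _} | #|e| == 3].
  by apply/subsetP => e; rewrite !inE => /andP[].
have [|E [windowsE E3 E_card]] := subset_between (k := 120 * n) windows3.
  have := card_window_triples (10 * n).
  by rewrite card_draws card_ord (leq_120n_bin n_gt0) andbT; lia.
by exists E; split => // e /(subsetP E3); rewrite inE => /eqP.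
Qed.

Theorem lemma5p2 :
  exists N : nat, forall n : nat, N <= n ->
    exists (E : {set {set 'I_(10 * n)}}) (Z : {set 'I_(10 * n)}),
      [/\ uniform 3 E, #|E| = 120 * n, #|Z| = 2 * n &
        forall Z' : {set 'I_(10 * n)}, Z' \subset Z -> #|Z'| = n ->
          has_perfect_matching (~: Z') (del_edges E Z')].
Proof.
exists 1 => n n_gt0.
have [E [windowsE E_uniform E_card]] := window_hypergraph n_gt0.
have mul5_lt (j : 'I_(2 * n)) : 5 * j < 10 * n by have := ltn_ord j; lia.
exists E, [set Ordinal (mul5_lt j) | j : 'I_(2 * n)]; split => //.
  by rewrite card_imset ?card_ord // => i k [] /eqP; rewrite eqn_pmul2l // => /eqP /val_inj.
move=> Z' Z'Z Z'_card.
have [P partP PE] : exists2 P, partition P (~: Z') & P \subset window_triples (10 * n).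
  apply: window_partition.
    rewrite setCK => u v /(subsetP Z'Z)/imsetP[i _ ->] /(subsetP Z'Z)/imsetP[k _ ->] /=.
    lia.
  have := cardsC Z'; rewrite card_ord Z'_card => ?.
  have -> : #|~: Z'| = 3 * (3 * n) by lia.
  exact: dvdn_mulr.
rewrite -[Z' in del_edges _ Z']setCK.
exact: partition_perfect_matching partP (subset_trans PE windowsE).
Qed.
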